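(* Let $u\in C^4(\mathbb{R}^3)$ be a $2$-convex solution of $\sigma_2(D^2u)=1$ in $\mathbb{R}^3$. Then at every point, $$\sum_{i,j=1}^3\sigma_2^{ij}\,(\log\Delta u)_{ij}\ \ge\ \frac{1}{25}\sum_{i,j=1}^3\sigma_2^{ij}\,(\log\Delta u)_i\,(\log\Delta u)_j.$$
   Context: $\sigma_2(D^2u)$ is the second elementary symmetric function of the eigenvalues of $D^2u$, and $\sigma_2^{ij}=\partial\sigma_2/\partial u_{ij}$ evaluated at $D^2u$ (so $\sigma_2^{ij}=\Delta u\,\delta_{ij}-u_{ij}$). A function is $2$-convex if the eigenvalues $\lambda$ of its Hessian satisfy $\sigma_1(\lambda)>0$, $\sigma_2(\lambda)>0$ at every point; in particular $\Delta u=\sigma_1(D^2u)>0$. Subscripts denote partial derivatives. *)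

From Stdlib Require Import Reals Lra ClassicalEpsilon.
Open Scope R_scope.

Definition R3 : Type := (R * R * R)%type.

Definition coord (x : R3) (i : nat) : R :=
  match x with (a, b, c) =>
    match i with 0%nat => a | 1%nat => b | _ => c end end.

Definition shift (x : R3) (i : nat) (t : R) : R3 :=
  match x with (a, b, c) =>
    match i with
    | 0%nat => (a + t, b, c)
    | 1%nat => (a, b + t, c)
    | 2%nat => (a, b, c + t)
    | _ => (a, b, c)
    end end.

Definition has_partial (f : R3 -> R) (i : nat) (x : R3) (l : R) : Prop :=
  derivable_pt_lim (fun t => f (shift x i t)) 0 l.

(* the partial derivative f_i (the unique limit when it exists; junk otherwise) *)
Definition pd (i : nat) (f : R3 -> R) (x : R3) : R :=
  epsilon (inhabits 0) (fun l => has_partial f i x l).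

Definition dist3 (x y : R3) : R :=
  Rmax (Rabs (coord x 0 - coord y 0))
       (Rmax (Rabs (coord x 1 - coord y 1)) (Rabs (coord x 2 - coord y 2))).

Definition cont3 (f : R3 -> R) : Prop :=
  forall x eps, 0 < eps -> exists delta, 0 < delta /\
    forall y, dist3 y x < delta -> Rabs (f y - f x) < eps.

Fixpoint Ck (k : nat) (f : R3 -> R) : Prop :=
  match k with
  | 0%nat => cont3 f
  | S k' => cont3 f /\
      forall i, (i < 3)%nat ->
        (forall x, exists l, has_partial f i x l) /\ Ck k' (pd i f)
  end.

Definition sum3 (g : nat -> R) : R := g 0%nat + g 1%nat + g 2%nat.

Definition hess (u : R3 -> R) (x : R3) (i j : nat) : R := pd i (pd j u) x.

Definition lap (u : R3 -> R) (x : R3) : R := sum3 (fun i => hess u x i i).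

(* sigma_2(D^2 u) = sum of the principal 2x2 minors of the Hessian
   (= second elementary symmetric function of its eigenvalues). *)
Definition sigma2 (u : R3 -> R) (x : R3) : R :=
  let h := hess u x in
  (h 0%nat 0%nat * h 1%nat 1%nat - h 0%nat 1%nat * h 1%nat 0%nat) +
  (h 0%nat 0%nat * h 2%nat 2%nat - h 0%nat 2%nat * h 2%nat 0%nat) +
  (h 1%nat 1%nat * h 2%nat 2%nat - h 1%nat 2%nat * h 2%nat 1%nat).

Definition kron (i j : nat) : R := if Nat.eqb i j then 1 else 0.

Definition sigma2_ij (u : R3 -> R) (x : R3) (i j : nat) : R :=
  lap u x * kron i j - hess u x i j.

Definition two_convex (u : R3 -> R) : Prop :=
  forall x, 0 < lap u x /\ 0 < sigma2 u x.

From Stdlib Require Import Reals Lra Psatz Nsatz Lia FunctionalExtensionality ClassicalEpsilon.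
Open Scope R_scope.

(** Fix x and write H = D²u(x), T = D³u(x) (a fully symmetric 3-tensor),
  L = Δu(x) and t_k = (Δu)_k = Σ_i T_iik.  Since w = log Δu,
      L² w_ij = L L_ij - L_i L_j,       L² w_i w_j = L_i L_j,
  so the claim follows from  L · σ₂^{ij} L_ij ≥ (26/25) σ₂^{ij} t_i t_j.
  Differentiating σ₂(D²u) = 1 once gives σ₂^{ij} T_ijk = 0 for each k, and
  twice (and contracting) gives σ₂^{ij} L_ij = |T|² - |t|².  The statement is
  thus reduced to a purely algebraic inequality about a symmetric matrix H
  with tr H > 0, σ₂(H) > 0 and a symmetric tensor T in the kernel of the
  cofactor contraction.  That inequality is proved in an eigenframe of H:
  there it splits into three independent inequalities in few variables,
  each settled (after the Ravi substitution) by an explicit sum of squares. *)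

Lemma sum3_ext (f g : nat -> R) : (forall i, f i = g i) -> sum3 f = sum3 g.
Proof. intros h. unfold sum3. rewrite !h. reflexivity. Qed.

Lemma sum3_ext_lt (f g : nat -> R) : (forall i, (i<3)%nat -> f i = g i) -> sum3 f = sum3 g.
Proof. intros h. unfold sum3. rewrite !h by lia. reflexivity. Qed.

Lemma sum3_diagonal (M X : nat -> nat -> R) :
  (forall a b, (a<3)%nat -> (b<3)%nat -> a <> b -> M a b = 0) ->
  sum3 (fun a => sum3 (fun b => M a b * X a b)) = sum3 (fun a => M a a * X a a).
Proof.
  intros h. unfold sum3.
  rewrite (h 0%nat 1%nat), (h 0%nat 2%nat), (h 1%nat 0%nat), (h 1%nat 2%nat),
      (h 2%nat 0%nat), (h 2%nat 1%nat) by lia. ring.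
Qed.

Definition tnorm2 (X : nat -> nat -> nat -> R) : R :=
  sum3 (fun i => sum3 (fun j => sum3 (fun k => (X i j k)^2))).

(** Bring every entry T i j k of a fully symmetric 3-tensor (given its two
    transposition symmetries S12, S23) to non-decreasing indices i ≤ j ≤ k. *)
Ltac sym3_normalize T S12 S23 :=
  repeat match goal with
  | |- context [T 1%nat 0%nat ?k] => rewrite (S12 1%nat 0%nat k) by lia
  | |- context [T 2%nat 0%nat ?k] => rewrite (S12 2%nat 0%nat k) by lia
  | |- context [T 2%nat 1%nat ?k] => rewrite (S12 2%nat 1%nat k) by lia
  | |- context [T ?i 1%nat 0%nat] => rewrite (S23 i 1%nat 0%nat) by lia
  | |- context [T ?i 2%nat 0%nat] => rewrite (S23 i 2%nat 0%nat) by lia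
  | |- context [T ?i 2%nat 1%nat] => rewrite (S23 i 2%nat 1%nat) by lia
  end.

(** ** The inequality in an eigenframe *)

Ltac nonneg_poly :=
  repeat first [ apply Rplus_le_le_0_compat | apply Rmult_le_pos | apply pow_le | lra ].

(** The core estimate, after the Ravi substitution s₁ = (y+z)², s₂ = (x+z)²,
    s₃ = (x+y)²: eliminating a₁ through the constraint leaves a quadratic form
    in (a₂, a₃) whose coefficients A, C and discriminant 4AC - B² are
    polynomials in x, y, z with nonnegative coefficients. *)
Lemma ravi_inequality (x y z a1 a2 a3 : R) : 0 < x -> 0 < y -> 0 < z ->
  let s1 := (y+z)^2 in let s2 := (x+z)^2 in let s3 := (x+y)^2 in
  s1*a1+s2*a2+s3*a3 = 0 ->
  (s1+s2+s3)/2 * (a1^2+3*a2^2+3*a3^2-(a1+a2+a3)^2) >= 26/25 * s1 * (a1+a2+a3)^2.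
Proof.
  intros hx hy hz s1 s2 s3 hc.
  set (S := s1+s2+s3).
  set (A := S*(s1+s2) - 26/25*(s1-s2)^2).
  set (C := S*(s1+s3) - 26/25*(s1-s3)^2).
  set (B := S*(s2+s3-s1) - 2*(26/25)*(s1-s2)*(s1-s3)).
  assert (hA : A =
      4*z^4 + 8*y^1*z^3 + (146/25)*y^2*z^2 + (46/25)*y^3*z^1 + (24/25)*y^4 +
      8*x^1*z^3 + (508/25)*x^1*y^1*z^2 + (354/25)*x^1*y^2*z^1 + 2*x^1*y^3 + (146/25)*x^2*z^2 +
      (354/25)*x^2*y^1*z^1 + (152/25)*x^2*y^2 + (46/25)*x^3*z^1 + 2*x^3*y^1 + (24/25)*x^4)
    by (unfold A, S, s1, s2, s3; field).
  assert (hD : 4*A*C - B^2 =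
      (384/25)*z^8 + (1504/25)*y^1*z^7 + (2704/25)*y^2*z^6 + (3248/25)*y^3*z^5 + (3328/25)*y^4*z^4 +
      (3248/25)*y^5*z^3 + (2704/25)*y^6*z^2 + (1504/25)*y^7*z^1 + (384/25)*y^8 + (1568/25)*x^1*z^7 +
      (14016/25)*x^1*y^1*z^6 + (41296/25)*x^1*y^2*z^5 + (66384/25)*x^1*y^3*z^4 + (66384/25)*x^1*y^4*z^3 + (41296/25)*x^1*y^5*z^2 +
      (14016/25)*x^1*y^6*z^1 + (1568/25)*x^1*y^7 + (2928/25)*x^2*z^6 + (5488/5)*x^2*y^1*z^5 + (73376/25)*x^2*y^2*z^4 +
      (99328/25)*x^2*y^3*z^3 + (73376/25)*x^2*y^4*z^2 + (5488/5)*x^2*y^5*z^1 + (2928/25)*x^2*y^6 + (2896/25)*x^3*z^5 +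
      (29744/25)*x^3*y^1*z^4 + (68352/25)*x^3*y^2*z^3 + (68352/25)*x^3*y^3*z^2 + (29744/25)*x^3*y^4*z^1 + (2896/25)*x^3*y^5 +
      (1888/25)*x^4*z^4 + (19184/25)*x^4*y^1*z^3 + (31392/25)*x^4*y^2*z^2 + (19184/25)*x^4*y^3*z^1 + (1888/25)*x^4*y^4 +
      (528/25)*x^5*z^3 + (6384/25)*x^5*y^1*z^2 + (6384/25)*x^5*y^2*z^1 + (528/25)*x^5*y^3 + (176/25)*x^6*z^2 +
      (1952/25)*x^6*y^1*z^1 + (176/25)*x^6*y^2)
    by (unfold A, B, C, S, s1, s2, s3; field).
  assert (Apos : 0 < A).
  { rewrite hA. apply Rplus_le_lt_0_compat; [nonneg_poly | apply Rmult_lt_0_compat; [lra | apply pow_lt; lra]]. }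
  assert (Dpos : 0 <= 4*A*C - B^2) by (rewrite hD; nonneg_poly).
  assert (s1pos : 0 < s1) by (unfold s1; apply pow_lt; lra).
  assert (form_nonneg : 0 <= A*a2^2 + B*a2*a3 + C*a3^2).
  { assert (0 <= 4*A*(A*a2^2 + B*a2*a3 + C*a3^2)).
    { replace (4*A*(A*a2^2 + B*a2*a3 + C*a3^2)) with ((2*A*a2+B*a3)^2 + (4*A*C-B^2)*a3^2) by ring.
      pose proof (pow2_ge_0 (2*A*a2+B*a3)). pose proof (pow2_ge_0 a3). nra. }
    nra. }
  assert (elim_a1 : s1 * ((s1+s2+s3)/2 * (a1^2+3*a2^2+3*a3^2-(a1+a2+a3)^2)
                          - 26/25 * s1 * (a1+a2+a3)^2) = A*a2^2 + B*a2*a3 + C*a3^2).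
  { assert (regroup : s1 * ((s1+s2+s3)/2 * (a1^2+3*a2^2+3*a3^2-(a1+a2+a3)^2)
                              - 26/25 * s1 * (a1+a2+a3)^2)
       = S/2 * (-2*(s1*a1)*(a2+a3) + 2*s1*(a2^2+a3^2-a2*a3)) - 26/25*(s1*a1 + s1*a2 + s1*a3)^2)
      by (unfold S; ring).
    replace (s1*a1) with (-(s2*a2+s3*a3)) in regroup by lra.
    rewrite regroup. unfold A, B, C. field. }
  assert (0 <= (s1+s2+s3)/2 * (a1^2+3*a2^2+3*a3^2-(a1+a2+a3)^2) - 26/25 * s1 * (a1+a2+a3)^2).
  { apply (Rmult_le_reg_l s1); [exact s1pos |]. rewrite Rmult_0_r, elim_a1. exact form_nonneg. }
  unfold S in *. lra.
Qed.

Lemma lt_sum_of_gap (u1 u2 u3 : R) : 0 < u1 -> 0 < u2 -> 0 < u3 ->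
  (u1^2 - u2^2 - u3^2)^2 < 4*u2^2*u3^2 -> u1 < u2 + u3.
Proof.
  intros h1 h2 h3 h.
  assert (u1^2 - u2^2 - u3^2 < 2*u2*u3).
  { destruct (Rlt_or_le (u1^2 - u2^2 - u3^2) 0); [nra|].
    assert (0 < 2*u2*u3) by nra. nra. }
  nra.
Qed.

(** The core estimate for positive weights s with (Σs)² < 4 σ₂(s): their square
    roots are the sides of a nondegenerate triangle, so the Ravi substitution
    applies. *)
Lemma weighted_column_inequality (s1 s2 s3 a1 a2 a3 : R) : 0 < s1 -> 0 < s2 -> 0 < s3 ->
  (s1+s2+s3)^2 < 4*(s1*s2+s1*s3+s2*s3) ->
  s1*a1+s2*a2+s3*a3 = 0 ->
  (s1+s2+s3)/2 * (a1^2+3*a2^2+3*a3^2-(a1+a2+a3)^2) >= 26/25 * s1 * (a1+a2+a3)^2.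
Proof.
  intros h1 h2 h3 hg hc.
  set (u1 := sqrt s1). set (u2 := sqrt s2). set (u3 := sqrt s3).
  assert (e1 : u1^2 = s1) by (apply pow2_sqrt; lra).
  assert (e2 : u2^2 = s2) by (apply pow2_sqrt; lra).
  assert (e3 : u3^2 = s3) by (apply pow2_sqrt; lra).
  assert (p1 : 0 < u1) by (apply sqrt_lt_R0; lra).
  assert (p2 : 0 < u2) by (apply sqrt_lt_R0; lra).
  assert (p3 : 0 < u3) by (apply sqrt_lt_R0; lra).
  assert (t1 : u1 < u2 + u3) by (apply lt_sum_of_gap; auto; rewrite e1, e2, e3; nra).
  assert (t2 : u2 < u1 + u3) by (apply lt_sum_of_gap; auto; rewrite e1, e2, e3; nra).
  assert (t3 : u3 < u1 + u2) by (apply lt_sum_of_gap; auto; rewrite e1, e2, e3; nra).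
  pose proof (ravi_inequality ((u2+u3-u1)/2) ((u1+u3-u2)/2) ((u1+u2-u3)/2) a1 a2 a3
    ltac:(lra) ltac:(lra) ltac:(lra)) as H.
  cbv zeta in H.
  replace ((u1 + u3 - u2) / 2 + (u1 + u2 - u3) / 2) with u1 in H by field.
  replace ((u2 + u3 - u1) / 2 + (u1 + u2 - u3) / 2) with u2 in H by field.
  replace ((u2 + u3 - u1) / 2 + (u1 + u3 - u2) / 2) with u3 in H by field.
  rewrite e1, e2, e3 in H. exact (H hc).
Qed.

(** Keeping only the entries P_aac (indices {a,a,c}, which occur three times
    when a ≠ c) of a fully symmetric 3-tensor bounds its norm from below. *)
Lemma tnorm2_lower_bound (P : nat -> nat -> nat -> R)
  (S12 : forall a b c, P a b c = P b a c) (S23 : forall a b c, P a b c = P a c b) :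
  tnorm2 P >= sum3 (fun c => 3 * sum3 (fun a => (P a a c)^2) - 2 * (P c c c)^2).
Proof.
  unfold tnorm2, sum3. sym3_normalize P S12 S23.
  pose proof (pow2_ge_0 (P 0%nat 1%nat 2%nat)). lra.
Qed.

(** The algebraic inequality in an eigenframe: s_a are the diagonal entries of
    the cofactor matrix, P is the third-derivative tensor in that frame and
    tp_c = Σ_a P_aac its traces. *)
Lemma eigenframe_inequality (s : nat -> R) (P : nat -> nat -> nat -> R)
  (S12 : forall a b c, P a b c = P b a c) (S23 : forall a b c, P a b c = P a c b) :
  0 < s 0%nat -> 0 < s 1%nat -> 0 < s 2%nat ->
  (sum3 s)^2 < 4*(s 0%nat * s 1%nat + s 0%nat * s 2%nat + s 1%nat * s 2%nat) ->
  (forall c, (c<3)%nat -> sum3 (fun a => s a * P a a c) = 0) ->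
  sum3 s / 2 * (tnorm2 P - sum3 (fun c => (sum3 (fun a => P a a c))^2))
  >= 26/25 * sum3 (fun c => s c * (sum3 (fun a => P a a c))^2).
Proof.
  intros h0 h1 h2 hg hc. unfold sum3 in hg.
  pose proof (tnorm2_lower_bound P S12 S23) as lower.
  pose proof (hc 0%nat ltac:(lia)) as c0. pose proof (hc 1%nat ltac:(lia)) as c1.
  pose proof (hc 2%nat ltac:(lia)) as c2.
  unfold sum3 in *.
  pose proof (weighted_column_inequality (s 0%nat) (s 1%nat) (s 2%nat)
     (P 0%nat 0%nat 0%nat) (P 1%nat 1%nat 0%nat) (P 2%nat 2%nat 0%nat)
     h0 h1 h2 hg ltac:(lra)) as d0.
  pose proof (weighted_column_inequality (s 1%nat) (s 0%nat) (s 2%nat)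
     (P 1%nat 1%nat 1%nat) (P 0%nat 0%nat 1%nat) (P 2%nat 2%nat 1%nat)
     h1 h0 h2 ltac:(nra) ltac:(lra)) as d1.
  pose proof (weighted_column_inequality (s 2%nat) (s 0%nat) (s 1%nat)
     (P 2%nat 2%nat 2%nat) (P 0%nat 0%nat 2%nat) (P 1%nat 1%nat 2%nat)
     h2 h0 h1 ltac:(nra) ltac:(lra)) as d2.
  replace (s 1%nat + s 0%nat + s 2%nat) with (s 0%nat + s 1%nat + s 2%nat) in d1 by ring.
  replace (s 2%nat + s 0%nat + s 1%nat) with (s 0%nat + s 1%nat + s 2%nat) in d2 by ring.
  assert (half_pos : 0 <= (s 0%nat + s 1%nat + s 2%nat) / 2) by lra.
  pose proof (Rmult_le_compat_l _ _ _ half_pos (Rge_le _ _ lower)).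
  nra.
Qed.

(** ** Spectral theorem for symmetric 3×3 matrices *)

(** A real monic cubic has a real root (intermediate value theorem on [-M, M]). *)
Lemma cubic_has_root (b c d : R) : exists z, z^3 + b*z^2 + c*z + d = 0.
Proof.
  set (M := 1 + Rabs b + Rabs c + Rabs d).
  pose proof (Rabs_pos b). pose proof (Rabs_pos c). pose proof (Rabs_pos d).
  pose proof (Rle_abs b). pose proof (Rle_abs c). pose proof (Rle_abs d).
  pose proof (Rle_abs (-b)). pose proof (Rle_abs (-c)). pose proof (Rle_abs (-d)).
  rewrite Rabs_Ropp in *.
  assert (hM : 1 <= M) by (unfold M; lra).
  assert (hM2 : M <= M^2) by nra.
  assert (leading : M^3 - (Rabs b + Rabs c + Rabs d)*M^2 = M^2).
  { replace (M^3) with (M*M^2) by ring. unfold M at 1. ring. }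
  assert (fM : 0 < M^3 + b*M^2 + c*M + d).
  { assert (b*M^2 >= - Rabs b * M^2) by nra.
    assert (c*M >= - Rabs c * M^2) by nra.
    assert (d >= - Rabs d * M^2) by nra.
    nra. }
  assert (fm : (-M)^3 + b*(-M)^2 + c*(-M) + d < 0).
  { assert (b*M^2 <= Rabs b * M^2) by nra.
    assert (- c*M <= Rabs c * M^2) by nra.
    assert (d <= Rabs d * M^2) by nra.
    nra. }
  destruct (IVT (fun z => z^3 + b*z^2 + c*z + d) (-M) M) as [z [_ hz]];
    [apply derivable_continuous; reg | lra | exact fm | exact fM |].
  exists z. exact hz.
Qed.

Lemma sq3_zero (x y z : R) : x^2+y^2+z^2 <= 0 -> x = 0 /\ y = 0 /\ z = 0.
Proof. intros h. repeat split; nra. Qed.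

(** Try a candidate kernel vector; if it vanishes, record that its entries are 0. *)
Ltac try_kernel_candidate x y z :=
  let Hp := fresh "Hp" in let Hn := fresh "Hn" in
  destruct (Rlt_or_le 0 (x^2+y^2+z^2)) as [Hp|Hn];
  [ exists x, y, z; split; [exact Hp|]; clear Hp; repeat split; nsatz
  | apply sq3_zero in Hn; destruct Hn as [? [? ?]] ].

(** A singular symmetric 3×3 matrix has a nonzero kernel vector: a nonzero
    column of its adjugate if there is one, else a vector orthogonal to a
    nonzero row (rank ≤ 1), else any vector. *)
Lemma singular_sym_kernel (m00 m01 m02 m11 m12 m22 : R) :
  m00*(m11*m22-m12*m12) - m01*(m01*m22 - m12*m02) + m02*(m01*m12 - m11*m02) = 0 ->
  exists v0 v1 v2, 0 < v0^2+v1^2+v2^2 /\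
    m00*v0 + m01*v1 + m02*v2 = 0 /\ m01*v0 + m11*v1 + m12*v2 = 0 /\
    m02*v0 + m12*v1 + m22*v2 = 0.
Proof.
  intros hd.
  try_kernel_candidate (m01*m12 - m02*m11) (m02*m01 - m00*m12) (m00*m11 - m01*m01).
  try_kernel_candidate (m01*m22 - m02*m12) (m02*m02 - m00*m22) (m00*m12 - m01*m02).
  try_kernel_candidate (m11*m22 - m12*m12) (m12*m02 - m01*m22) (m01*m12 - m11*m02).
  try_kernel_candidate 0 m02 (-m01). try_kernel_candidate (-m02) 0 m00.
  try_kernel_candidate 0 m12 (-m11). try_kernel_candidate (-m12) 0 m01.
  try_kernel_candidate 0 m22 (-m12). try_kernel_candidate (-m22) 0 m02.
  exists 1, 0, 0. split; [lra|]. subst. repeat split; nsatz.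
Qed.

Lemma unit_rescale (x y z : R) : 0 < x^2+y^2+z^2 ->
  exists n, 0 < n /\ (x/n)^2 + (y/n)^2 + (z/n)^2 = 1.
Proof.
  intros h. exists (sqrt (x^2+y^2+z^2)).
  assert (hn : 0 < sqrt (x^2+y^2+z^2)) by (apply sqrt_lt_R0; exact h).
  split; [exact hn|].
  assert (e : (sqrt (x^2+y^2+z^2))^2 = x^2+y^2+z^2) by (apply pow2_sqrt; lra).
  transitivity ((x^2+y^2+z^2) / (sqrt (x^2+y^2+z^2))^2); [field; lra|].
  rewrite e. field. lra.
Qed.

Lemma det_shift_char_poly (h00 h01 h02 h11 h12 h22 l : R) :
  (h00-l)*((h11-l)*(h22-l)-h12*h12) - h01*(h01*(h22-l) - h12*h02) + h02*(h01*h12 - (h11-l)*h02)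
  = - (l^3 + (-(h00+h11+h22))*l^2
       + (h00*h11 - h01*h01 + h00*h22 - h02*h02 + h11*h22 - h12*h12)*l
       + (-(h00*(h11*h22-h12*h12) - h01*(h01*h22 - h12*h02) + h02*(h01*h12 - h11*h02)))).
Proof. ring. Qed.

Lemma sym_unit_eigenvector (h00 h01 h02 h11 h12 h22 : R) : exists l v0 v1 v2,
  v0^2+v1^2+v2^2 = 1 /\
  h00*v0 + h01*v1 + h02*v2 = l*v0 /\ h01*v0 + h11*v1 + h12*v2 = l*v1 /\
  h02*v0 + h12*v1 + h22*v2 = l*v2.
Proof.
  destruct (cubic_has_root (-(h00+h11+h22))
     (h00*h11 - h01*h01 + h00*h22 - h02*h02 + h11*h22 - h12*h12)
     (-(h00*(h11*h22-h12*h12) - h01*(h01*h22 - h12*h02) + h02*(h01*h12 - h11*h02)))) as [l hl].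
  destruct (singular_sym_kernel (h00-l) h01 h02 (h11-l) h12 (h22-l))
    as [v0 [v1 [v2 [hp [e0 [e1 e2]]]]]].
  { rewrite det_shift_char_poly, hl. ring. }
  destruct (unit_rescale v0 v1 v2 hp) as [n [hn hu]].
  exists l, (v0/n), (v1/n), (v2/n). split; [exact hu|].
  repeat split; apply (Rmult_eq_reg_l n); try lra; field_simplify; try lra; nra.
Qed.

Lemma unit_orthogonal (v0 v1 v2 : R) : v0^2+v1^2+v2^2 = 1 ->
  exists w0 w1 w2, w0^2+w1^2+w2^2 = 1 /\ v0*w0+v1*w1+v2*w2 = 0.
Proof.
  intros h.
  destruct (Rlt_or_le 0 (0^2 + v2^2 + (-v1)^2)) as [p|p].
  { destruct (unit_rescale 0 v2 (-v1) p) as [n [hn hu]]. exists (0/n), (v2/n), (-v1/n).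
    split; [exact hu|]. field. lra. }
  destruct (Rlt_or_le 0 ((-v2)^2 + 0^2 + v0^2)) as [q|q].
  { destruct (unit_rescale (-v2) 0 v0 q) as [n [hn hu]]. exists (-v2/n), (0/n), (v0/n).
    split; [exact hu|]. field. lra. }
  exfalso. nra.
Qed.

(** The Jacobi rotation: an angle (al, be) = (cos θ, sin θ) annihilating the
    off-diagonal entry of a symmetric 2×2 matrix [[a, b], [b, c]]. *)
Lemma jacobi_rotation (a b c : R) :
  exists al be, al^2 + be^2 = 1 /\ al*be*(c-a) + b*(al^2-be^2) = 0.
Proof.
  destruct (Req_dec b 0) as [hb|hb].
  { exists 1, 0. subst. split; ring. }
  set (r := sqrt ((a-c)^2 + 4*b^2)).
  assert (hr : r^2 = (a-c)^2 + 4*b^2)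
    by (apply pow2_sqrt; pose proof (pow2_ge_0 (a-c)); pose proof (pow2_ge_0 b); lra).
  assert (hp : 0 < b^2 + ((c-a+r)/2)^2 + 0^2).
  { assert (0 < b^2) by (simpl; rewrite Rmult_1_r; apply Rsqr_pos_lt; exact hb).
    pose proof (pow2_ge_0 ((c-a+r)/2)). lra. }
  destruct (unit_rescale b ((c-a+r)/2) 0 hp) as [n [hn hu]].
  exists (b/n), ((c-a+r)/2/n). split.
  - replace (0/n) with 0 in hu by (field; lra). lra.
  - apply (Rmult_eq_reg_l (n^2)); [|nra].
    field_simplify; [|lra]. nra.
Qed.

Lemma orthonormal_rows_columns (a b c d e f g h i : R) :
  a*a+b*b+c*c = 1 -> d*d+e*e+f*f=1 -> g*g+h*h+i*i=1 ->
  a*d+b*e+c*f = 0 -> a*g+b*h+c*i=0 -> d*g+e*h+f*i=0 ->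
  a*a+d*d+g*g = 1 /\ b*b+e*e+h*h = 1 /\ c*c+f*f+i*i = 1 /\
  a*b+d*e+g*h = 0 /\ a*c+d*f+g*i = 0 /\ b*c+e*f+h*i = 0.
Proof. intros. repeat split; nsatz. Qed.

Definition mk3 (a b c : R) (i : nat) : R :=
  match i with 0%nat => a | 1%nat => b | _ => c end.

Definition qform (S : nat -> nat -> R) (v w : nat -> R) : R :=
  sum3 (fun i => sum3 (fun j => v i * S i j * w j)).

Definition orthogonal3 (Q : nat -> nat -> R) : Prop :=
  (forall a b, (a<3)%nat -> (b<3)%nat -> sum3 (fun i => Q a i * Q b i) = kron a b) /\
  (forall i j, (i<3)%nat -> (j<3)%nat -> sum3 (fun a => Q a i * Q a j) = kron i j).

(** The first row is a unit
    eigenvector v; the other two are obtained by completing v to an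
    orthonormal frame (v, w, v × w) and applying a Jacobi rotation in the
    plane v^⊥. *)
Theorem sym_orthogonal_diagonalization (H : nat -> nat -> R) :
  (forall i j, (i<3)%nat -> (j<3)%nat -> H i j = H j i) ->
  exists Q, orthogonal3 Q /\
    forall a b, (a<3)%nat -> (b<3)%nat -> a <> b -> qform H (Q a) (Q b) = 0.
Proof.
  intros sym.
  assert (s10 : H 1%nat 0%nat = H 0%nat 1%nat) by (apply sym; lia).
  assert (s20 : H 2%nat 0%nat = H 0%nat 2%nat) by (apply sym; lia).
  assert (s21 : H 2%nat 1%nat = H 1%nat 2%nat) by (apply sym; lia).
  destruct (sym_unit_eigenvector (H 0%nat 0%nat) (H 0%nat 1%nat) (H 0%nat 2%nat)
              (H 1%nat 1%nat) (H 1%nat 2%nat) (H 2%nat 2%nat))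
    as [l [v0 [v1 [v2 [hv [e0 [e1 e2]]]]]]].
  destruct (unit_orthogonal v0 v1 v2 hv) as [w0 [w1 [w2 [hw hvw]]]].
  set (z0 := v1*w2 - v2*w1). set (z1 := v2*w0 - v0*w2). set (z2 := v0*w1 - v1*w0).
  destruct (jacobi_rotation (qform H (mk3 w0 w1 w2) (mk3 w0 w1 w2))
              (qform H (mk3 w0 w1 w2) (mk3 z0 z1 z2)) (qform H (mk3 z0 z1 z2) (mk3 z0 z1 z2)))
    as [al [be [hab hrot]]].
  unfold qform, sum3, mk3 in hrot. rewrite s10, s20, s21 in hrot.
  replace (al^2) with (al*al) in hab, hrot by ring. replace (be^2) with (be*be) in hab, hrot by ring.
  replace (v0^2+v1^2+v2^2) with (v0*v0+v1*v1+v2*v2) in hv by ring.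
  replace (w0^2+w1^2+w2^2) with (w0*w0+w1*w1+w2*w2) in hw by ring.
  assert (hz : z0*z0+z1*z1+z2*z2 = 1) by (unfold z0, z1, z2; clear -hv hw hvw; nsatz).
  assert (hvz : v0*z0+v1*z1+v2*z2 = 0) by (unfold z0, z1, z2; ring).
  assert (hwz : w0*z0+w1*z1+w2*z2 = 0) by (unfold z0, z1, z2; ring).
  set (q0 := al*w0+be*z0). set (q1 := al*w1+be*z1). set (q2 := al*w2+be*z2).
  set (r0 := -be*w0+al*z0). set (r1 := -be*w1+al*z1). set (r2 := -be*w2+al*z2).
  assert (R2 : q0*q0+q1*q1+q2*q2 = 1) by (unfold q0, q1, q2; clear -hw hz hwz hab; nsatz).
  assert (R3 : r0*r0+r1*r1+r2*r2 = 1) by (unfold r0, r1, r2; clear -hw hz hwz hab; nsatz).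
  assert (R12 : v0*q0+v1*q1+v2*q2 = 0) by (unfold q0, q1, q2; clear -hvw hvz; nsatz).
  assert (R13 : v0*r0+v1*r1+v2*r2 = 0) by (unfold r0, r1, r2; clear -hvw hvz; nsatz).
  assert (R23 : q0*r0+q1*r1+q2*r2 = 0)
    by (unfold q0, q1, q2, r0, r1, r2; clear -hw hz hwz hab; nsatz).
  destruct (orthonormal_rows_columns v0 v1 v2 q0 q1 q2 r0 r1 r2 hv R2 R3 R12 R13 R23)
    as [C1 [C2 [C3 [C4 [C5 C6]]]]].
  exists (fun a => match a with 0%nat => mk3 v0 v1 v2 | 1%nat => mk3 q0 q1 q2
                            | _ => mk3 r0 r1 r2 end).
  split; [split|].
  - intros a b ha hb.
    destruct a as [|[|[|a]]]; try lia; destruct b as [|[|[|b]]]; try lia;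
      unfold sum3, kron; simpl; lra.
  - intros a b ha hb.
    destruct a as [|[|[|a]]]; try lia; destruct b as [|[|[|b]]]; try lia;
      unfold sum3, kron; simpl; lra.
  - intros a b ha hb hne.
    destruct a as [|[|[|a]]]; try lia; destruct b as [|[|[|b]]]; try lia; try congruence;
      unfold qform, sum3; simpl; rewrite ?s10, ?s20, ?s21.
    all: clear -e0 e1 e2 R12 R13 hrot; unfold q0, q1, q2, r0, r1, r2, z0, z1, z2 in *; nsatz.
Qed.

Definition rot3 (Q : nat -> nat -> R) (T : nat -> nat -> nat -> R) (a b c : nat) : R :=
  sum3 (fun i => sum3 (fun j => sum3 (fun k => Q a i * Q b j * Q c k * T i j k))).

Definition rotv (Q : nat -> nat -> R) (v : nat -> R) (a : nat) : R :=
  sum3 (fun i => Q a i * v i).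

Section OrthogonalInvariance.

Variable Q : nat -> nat -> R.
Hypothesis Qorth : orthogonal3 Q.

Let gram (i j : nat) : R := sum3 (fun a => Q a i * Q a j).

Let gram_id : forall i j, (i<3)%nat -> (j<3)%nat -> gram i j = kron i j.
Proof. exact (proj2 Qorth). Qed.

Ltac gram_to_kron :=
  repeat match goal with |- context [gram ?i ?j] => rewrite (gram_id i j) by lia end;
  unfold kron; simpl.

Lemma rotv_norm (v : nat -> R) :
  sum3 (fun a => (rotv Q v a)^2) = sum3 (fun i => (v i)^2).
Proof.
  transitivity (sum3 (fun i => sum3 (fun j => gram i j * v i * v j))).
  - unfold rotv, gram, sum3. ring.
  - unfold sum3. gram_to_kron. ring.
Qed.

(** Rotating a 3-tensor preserves its norm: rotate one index at a time. *)
Lemma tnorm2_rot3 (T : nat -> nat -> nat -> R) : tnorm2 (rot3 Q T) = tnorm2 T.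
Proof.
  set (F := fun a j k => rotv Q (fun i => T i j k) a).
  set (G := fun a b k => rotv Q (fun j => F a j k) b).
  assert (e1 : forall a b, sum3 (fun c => (rot3 Q T a b c)^2) = sum3 (fun k => (G a b k)^2)).
  { intros a b. rewrite <- (rotv_norm (G a b)). apply sum3_ext. intros c.
    f_equal. unfold rot3, G, F, rotv, sum3. ring. }
  transitivity (sum3 (fun a => sum3 (fun b => sum3 (fun k => (G a b k)^2)))).
  { unfold tnorm2. apply sum3_ext; intro a. apply sum3_ext; intro b. apply e1. }
  transitivity (sum3 (fun a => sum3 (fun k => sum3 (fun b => (G a b k)^2)))).
  { unfold sum3. ring. }
  transitivity (sum3 (fun a => sum3 (fun k => sum3 (fun j => (F a j k)^2)))).
  { apply sum3_ext; intro a. apply sum3_ext; intro k. apply (rotv_norm (fun j => F a j k)). }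
  transitivity (sum3 (fun j => sum3 (fun k => sum3 (fun a => (F a j k)^2)))).
  { unfold sum3. ring. }
  transitivity (sum3 (fun j => sum3 (fun k => sum3 (fun i => (T i j k)^2)))).
  { apply sum3_ext; intro j. apply sum3_ext; intro k. apply (rotv_norm (fun i => T i j k)). }
  unfold tnorm2, sum3. ring.
Qed.

Lemma rot3_trace (T : nat -> nat -> nat -> R) c :
  sum3 (fun a => rot3 Q T a a c) = rotv Q (fun k => sum3 (fun i => T i i k)) c.
Proof.
  transitivity (sum3 (fun k => Q c k * sum3 (fun i => sum3 (fun j => gram i j * T i j k)))).
  - unfold rot3, rotv, gram, sum3. ring.
  - unfold rotv, sum3. gram_to_kron. ring.
Qed.

Lemma rot3_contract (S : nat -> nat -> R) (T : nat -> nat -> nat -> R) c :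
  sum3 (fun a => sum3 (fun b => qform S (Q a) (Q b) * rot3 Q T a b c))
  = rotv Q (fun k => sum3 (fun i => sum3 (fun j => S i j * T i j k))) c.
Proof.
  transitivity (sum3 (fun k => Q c k * sum3 (fun p => sum3 (fun q => sum3 (fun i => sum3 (fun j =>
     gram p i * gram q j * S p q * T i j k)))))).
  - unfold qform, rot3, rotv, gram, sum3. ring.
  - unfold rotv, sum3. gram_to_kron. ring.
Qed.

Lemma qform_rot_quadratic (S : nat -> nat -> R) (v : nat -> R) :
  sum3 (fun a => sum3 (fun b => qform S (Q a) (Q b) * (rotv Q v a * rotv Q v b)))
  = sum3 (fun p => sum3 (fun q => S p q * v p * v q)).
Proof.
  transitivity (sum3 (fun p => sum3 (fun q => sum3 (fun k => sum3 (fun l =>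
     gram p k * gram q l * S p q * v k * v l))))).
  - unfold qform, rotv, gram, sum3. ring.
  - unfold sum3. gram_to_kron. ring.
Qed.

Lemma qform_rot_norm (S : nat -> nat -> R) :
  sum3 (fun a => sum3 (fun b => (qform S (Q a) (Q b))^2))
  = sum3 (fun p => sum3 (fun q => (S p q)^2)).
Proof.
  transitivity (sum3 (fun p => sum3 (fun q => sum3 (fun k => sum3 (fun l =>
     gram p k * gram q l * S p q * S k l))))).
  - unfold qform, gram, sum3. ring.
  - unfold sum3. gram_to_kron. ring.
Qed.

Lemma qform_rot_trace (S : nat -> nat -> R) :
  sum3 (fun a => qform S (Q a) (Q a)) = sum3 (fun i => S i i).
Proof.
  transitivity (sum3 (fun i => sum3 (fun j => gram i j * S i j))).
  - unfold qform, gram, sum3. ring.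
  - unfold sum3. gram_to_kron. ring.
Qed.

End OrthogonalInvariance.

Lemma rot3_symmetric (Q : nat -> nat -> R) (T : nat -> nat -> nat -> R)
  (Ts12 : forall i j k, (i<3)%nat -> (j<3)%nat -> (k<3)%nat -> T i j k = T j i k)
  (Ts23 : forall i j k, (i<3)%nat -> (j<3)%nat -> (k<3)%nat -> T i j k = T i k j) :
  (forall a b c, rot3 Q T a b c = rot3 Q T b a c) /\ (forall a b c, rot3 Q T a b c = rot3 Q T a c b).
Proof.
  split; intros a b c; unfold rot3, sum3; sym3_normalize T Ts12 Ts23; ring.
Qed.

Definition sigma2_mat (H : nat -> nat -> R) : R :=
  (H 0%nat 0%nat * H 1%nat 1%nat - H 0%nat 1%nat * H 1%nat 0%nat) +
  (H 0%nat 0%nat * H 2%nat 2%nat - H 0%nat 2%nat * H 2%nat 0%nat) +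
  (H 1%nat 1%nat * H 2%nat 2%nat - H 1%nat 2%nat * H 2%nat 1%nat).

(** The matrix σ₂^{ij}(H) = tr H δ_ij - H_ij of partial derivatives of σ₂. *)
Definition sigma2_cof (H : nat -> nat -> R) (i j : nat) : R :=
  sum3 (fun l => H l l) * kron i j - H i j.

Definition trace_vec (T : nat -> nat -> nat -> R) (k : nat) : R :=
  sum3 (fun i => T i i k).

Lemma cofactor_eigenvalues (l0 l1 l2 : R) :
  0 < l0 + l1 + l2 -> l0^2 + l1^2 + l2^2 < (l0 + l1 + l2)^2 ->
  0 < l1 + l2 /\ 0 < l0 + l2 /\ 0 < l0 + l1 /\
  ((l1+l2) + (l0+l2) + (l0+l1))^2 <
    4*((l1+l2)*(l0+l2) + (l1+l2)*(l0+l1) + (l0+l2)*(l0+l1)).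
Proof.
  intros hD hl.
  pose proof (pow2_ge_0 l0). pose proof (pow2_ge_0 l1). pose proof (pow2_ge_0 l2).
  assert (0 < l1 + l2).
  { destruct (Rlt_or_le 0 (l1+l2)) as [q|q]; [exact q|]. nra. }
  assert (0 < l0 + l2).
  { destruct (Rlt_or_le 0 (l0+l2)) as [q|q]; [exact q|]. nra. }
  assert (0 < l0 + l1).
  { destruct (Rlt_or_le 0 (l0+l1)) as [q|q]; [exact q|]. nra. }
  repeat split; try assumption. nra.
Qed.

Lemma sigma2_mat_norm (H : nat -> nat -> R) :
  (forall i j, (i<3)%nat -> (j<3)%nat -> H i j = H j i) ->
  sigma2_mat H = ((sum3 (fun i => H i i))^2 - sum3 (fun p => sum3 (fun q => (H p q)^2)))/2.
Proof.
  intros Hs. unfold sigma2_mat, sum3.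
  rewrite (Hs 1%nat 0%nat), (Hs 2%nat 0%nat), (Hs 2%nat 1%nat) by lia. field.
Qed.

Section KeyInequality.

Variable H : nat -> nat -> R.
Variable T : nat -> nat -> nat -> R.
Hypothesis Hsym : forall i j, (i<3)%nat -> (j<3)%nat -> H i j = H j i.
Hypothesis Ts12 : forall i j k, (i<3)%nat -> (j<3)%nat -> (k<3)%nat -> T i j k = T j i k.
Hypothesis Ts23 : forall i j k, (i<3)%nat -> (j<3)%nat -> (k<3)%nat -> T i j k = T i k j.
Hypothesis trace_pos : 0 < sum3 (fun i => H i i).
Hypothesis sigma2_pos : 0 < sigma2_mat H.
Hypothesis cof_kernel : forall k, (k<3)%nat ->
  sum3 (fun i => sum3 (fun j => sigma2_cof H i j * T i j k)) = 0.

(** In an eigenframe Q of H the cofactor matrix is diagonal with entries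
    s_a = tr H - λ_a, which satisfy the hypotheses of the eigenframe inequality. *)
Lemma cofactor_in_eigenframe (Q : nat -> nat -> R) :
  orthogonal3 Q ->
  (forall a b, (a<3)%nat -> (b<3)%nat -> a <> b -> qform H (Q a) (Q b) = 0) ->
  let s := fun a => qform (sigma2_cof H) (Q a) (Q a) in
  (forall a b, (a<3)%nat -> (b<3)%nat -> a <> b -> qform (sigma2_cof H) (Q a) (Q b) = 0) /\
  0 < s 0%nat /\ 0 < s 1%nat /\ 0 < s 2%nat /\
  (sum3 s)^2 < 4*(s 0%nat * s 1%nat + s 0%nat * s 2%nat + s 1%nat * s 2%nat) /\
  sum3 s = 2 * sum3 (fun i => H i i).
Proof.
  intros Qorth offdiag s.
  set (D := sum3 (fun i => H i i)).
  set (l := fun a => qform H (Q a) (Q a)).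
  assert (hD : 0 < D) by exact trace_pos.
  assert (cof_frame : forall a b, (a<3)%nat -> (b<3)%nat ->
            qform (sigma2_cof H) (Q a) (Q b) = D * kron a b - qform H (Q a) (Q b)).
  { intros a b ha hb. rewrite <- (proj1 Qorth a b ha hb).
    unfold qform, sigma2_cof, D, sum3, kron. simpl. ring. }
  assert (es : forall a, (a<3)%nat -> s a = D - l a).
  { intros a ha. unfold s. rewrite cof_frame by exact ha.
    unfold kron. rewrite Nat.eqb_refl. fold (l a). ring. }
  assert (trace_l : l 0%nat + l 1%nat + l 2%nat = D)
    by (exact (qform_rot_trace Q Qorth H)).
  assert (norm_l : (l 0%nat)^2 + (l 1%nat)^2 + (l 2%nat)^2
                   = sum3 (fun p => sum3 (fun q => (H p q)^2))).
  { rewrite <- (qform_rot_norm Q Qorth H). unfold sum3, l.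
    rewrite (offdiag 0%nat 1%nat), (offdiag 0%nat 2%nat), (offdiag 1%nat 0%nat),
      (offdiag 1%nat 2%nat), (offdiag 2%nat 0%nat), (offdiag 2%nat 1%nat) by lia. ring. }
  rewrite (sigma2_mat_norm H Hsym) in sigma2_pos. fold D in sigma2_pos.
  destruct (cofactor_eigenvalues (l 0%nat) (l 1%nat) (l 2%nat)) as [p0 [p1 [p2 gam]]];
    [lra | rewrite norm_l, trace_l; lra |].
  rewrite (es 0%nat), (es 1%nat), (es 2%nat) by lia. unfold sum3.
  rewrite (es 0%nat), (es 1%nat), (es 2%nat) by lia.
  repeat split; try lra.
  - intros a b ha hb hab. rewrite cof_frame, offdiag by auto. unfold kron.
    destruct (Nat.eqb_spec a b); [congruence | ring].
  - replace (D - l 0%nat) with (l 1%nat + l 2%nat) by lra.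
    replace (D - l 1%nat) with (l 0%nat + l 2%nat) by lra.
    replace (D - l 2%nat) with (l 0%nat + l 1%nat) by lra. exact gam.
Qed.

(** The algebraic key inequality:
      tr H · (|T|² - |t|²) ≥ (26/25) σ₂^{ij}(H) t_i t_j,   t = trace_vec T.
    Rotating to an eigenframe of H turns it into the eigenframe inequality. *)
Theorem key_inequality :
  sum3 (fun i => H i i) * (tnorm2 T - sum3 (fun k => (trace_vec T k)^2))
  >= 26/25 * sum3 (fun i => sum3 (fun j =>
       sigma2_cof H i j * trace_vec T i * trace_vec T j)).
Proof.
  destruct (sym_orthogonal_diagonalization H Hsym) as [Q [Qorth offdiag]].
  destruct (cofactor_in_eigenframe Q Qorth offdiag) as [cof_off [p0 [p1 [p2 [gam ssum]]]]].
  set (s := fun a => qform (sigma2_cof H) (Q a) (Q a)) in *.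
  set (P := rot3 Q T).
  destruct (rot3_symmetric Q T Ts12 Ts23) as [PS12 PS23].
  assert (constraint : forall c, (c<3)%nat -> sum3 (fun a => s a * P a a c) = 0).
  { intros c hc. pose proof (rot3_contract Q Qorth (sigma2_cof H) T c) as e.
    rewrite (sum3_diagonal _ _ cof_off) in e. unfold s, P. rewrite e.
    unfold rotv. rewrite (sum3_ext_lt _ (fun _ => 0)); [unfold sum3; ring |].
    intros k hk. rewrite cof_kernel by exact hk. ring. }
  assert (traces : forall c, sum3 (fun a => P a a c) = rotv Q (trace_vec T) c)
    by (intro c; apply (rot3_trace Q Qorth)).
  assert (traces_norm : sum3 (fun c => (sum3 (fun a => P a a c))^2)
                        = sum3 (fun k => (trace_vec T k)^2)).
  { rewrite <- (rotv_norm Q Qorth (trace_vec T)).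
    apply sum3_ext. intro c. rewrite traces. reflexivity. }
  assert (quadratic : sum3 (fun c => s c * (sum3 (fun a => P a a c))^2)
     = sum3 (fun i => sum3 (fun j => sigma2_cof H i j * trace_vec T i * trace_vec T j))).
  { rewrite <- (qform_rot_quadratic Q Qorth), (sum3_diagonal _ _ cof_off).
    apply sum3_ext. intro c. rewrite traces. unfold s. ring. }
  pose proof (eigenframe_inequality s P PS12 PS23 p0 p1 p2 gam constraint) as ineq.
  rewrite traces_norm, quadratic, ssum in ineq. unfold P in ineq.
  rewrite (tnorm2_rot3 Q Qorth) in ineq.
  replace (2 * sum3 (fun i => H i i) / 2) with (sum3 (fun i => H i i)) in ineq by field.
  exact ineq.
Qed.

End KeyInequality.

Ltac triple_eq := match goal with
  | |- (?a,?b,?c) = (?d,?e,?f) =>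
      replace a with d by ring; replace b with e by ring; replace c with f by ring; reflexivity
  end.

Lemma shift_0 (x : R3) i : shift x i 0 = x.
Proof. destruct x as [[a b] c]. destruct i as [|[|[|i]]]; simpl; triple_eq. Qed.

Lemma shift_add (x : R3) i s t : shift (shift x i s) i t = shift x i (s + t).
Proof. destruct x as [[a b] c]. destruct i as [|[|[|i]]]; simpl; triple_eq. Qed.

Lemma shift_comm (x : R3) i j s t : shift (shift x i s) j t = shift (shift x j t) i s.
Proof.
  destruct x as [[a b] c].
  destruct i as [|[|[|i]]]; destruct j as [|[|[|j]]]; simpl; triple_eq.
Qed.

Lemma pd_spec (f : R3 -> R) i x : (exists l, has_partial f i x l) -> has_partial f i x (pd i f x).
Proof. intros h. unfold pd. apply (epsilon_spec (inhabits 0) (fun l => has_partial f i x l) h). Qed.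

Lemma pd_unique (f : R3 -> R) i x l : has_partial f i x l -> pd i f x = l.
Proof.
  intros h. pose proof (pd_spec f i x (ex_intro _ l h)) as h2.
  exact (uniqueness_limite _ _ _ _ h2 h).
Qed.

Lemma has_partial_eq (f : R3 -> R) i x a b : has_partial f i x a -> a = b -> has_partial f i x b.
Proof. intros h e. subst. exact h. Qed.

Lemma has_partial_line (f : R3 -> R) i y s0 l :
  has_partial f i (shift y i s0) l -> derivable_pt_lim (fun s => f (shift y i s)) s0 l.
Proof.
  unfold has_partial, derivable_pt_lim. intros h eps he.
  destruct (h eps he) as [d hd]. exists d. intros k hk hk2.
  specialize (hd k hk hk2). rewrite !shift_add, Rplus_0_r, Rplus_0_l in hd. exact hd.
Qed.

Lemma hp_const (c : R) i x : has_partial (fun _ => c) i x 0.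
Proof. unfold has_partial. apply (derivable_pt_lim_const c 0). Qed.

Lemma hp_plus (f g : R3 -> R) i x a b : has_partial f i x a -> has_partial g i x b ->
  has_partial (fun y => f y + g y) i x (a + b).
Proof. intros h1 h2. exact (derivable_pt_lim_plus _ _ _ _ _ h1 h2). Qed.

Lemma hp_minus (f g : R3 -> R) i x a b : has_partial f i x a -> has_partial g i x b ->
  has_partial (fun y => f y - g y) i x (a - b).
Proof. intros h1 h2. exact (derivable_pt_lim_minus _ _ _ _ _ h1 h2). Qed.

Lemma hp_mult (f g : R3 -> R) i x a b : has_partial f i x a -> has_partial g i x b ->
  has_partial (fun y => f y * g y) i x (a * g x + f x * b).
Proof.
  intros h1 h2. pose proof (derivable_pt_lim_mult _ _ _ _ _ h1 h2) as h.
  cbv beta in h. rewrite !shift_0 in h. exact h.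
Qed.

Lemma hp_div (f g : R3 -> R) i x a b : g x <> 0 -> has_partial f i x a -> has_partial g i x b ->
  has_partial (fun y => f y / g y) i x ((a * g x - b * f x) / (g x)^2).
Proof.
  intros hg h1 h2.
  assert (hg' : (fun t => g (shift x i t)) 0 <> 0) by (simpl; rewrite shift_0; exact hg).
  pose proof (derivable_pt_lim_div _ _ _ _ _ h1 h2 hg') as h. cbv beta in h. rewrite !shift_0 in h.
  replace ((g x)^2) with (Rsqr (g x)) by (unfold Rsqr; ring). exact h.
Qed.

Lemma hp_ln (f : R3 -> R) i x a : 0 < f x -> has_partial f i x a ->
  has_partial (fun y => ln (f y)) i x (a / f x).
Proof.
  intros hp h.
  assert (hl : derivable_pt_lim ln ((fun t => f (shift x i t)) 0) (/ f x)).
  { rewrite shift_0. apply derivable_pt_lim_ln. exact hp. }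
  pose proof (derivable_pt_lim_comp _ _ _ _ _ h hl) as hc.
  unfold comp in hc. replace (a / f x) with (/ f x * a) by (field; lra). exact hc.
Qed.

Lemma Ck_mono k (f : R3 -> R) : Ck (S k) f -> Ck k f.
Proof.
  revert f. induction k as [|k IH]; intros f h.
  - exact (proj1 h).
  - destruct h as [hc hp]. split; [exact hc|]. intros i hi. destruct (hp i hi) as [e c].
    split; [exact e|]. apply IH. exact c.
Qed.

Lemma Ck_pd k (f : R3 -> R) i : (i<3)%nat -> Ck (S k) f -> Ck k (pd i f).
Proof. intros hi h. exact (proj2 (proj2 h i hi)). Qed.

Lemma Ck_has_partial k (f : R3 -> R) i x : (i<3)%nat -> Ck (S k) f -> has_partial f i x (pd i f x).
Proof. intros hi h. apply pd_spec. exact (proj1 (proj2 h i hi) x). Qed.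

Lemma Ck_cont k (f : R3 -> R) : Ck k f -> cont3 f.
Proof. destruct k; simpl; [auto | intros h; exact (proj1 h)]. Qed.

(** ** Schwarz's theorem *)

Lemma dist_shift2 (x : R3) i j s t d : (i<3)%nat -> (j<3)%nat -> i <> j ->
  Rabs s < d -> Rabs t < d -> dist3 (shift (shift x i s) j t) x < d.
Proof.
  intros hi hj hij hs ht. destruct x as [[a b] c].
  assert (h0 : Rabs 0 < d) by (rewrite Rabs_R0; pose proof (Rabs_pos s); lra).
  destruct i as [|[|[|i]]]; try lia; destruct j as [|[|[|j]]]; try lia; try congruence;
  unfold dist3, coord; simpl;
  repeat match goal with |- context [?p + ?q - ?p] => replace (p + q - p) with q by ring end;
  repeat match goal with |- context [?p - ?p] => replace (p - p) with 0 by ring end;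
  repeat apply Rmax_lub_lt; assumption.
Qed.

Lemma eq_of_close (a b : R) : (forall eps, 0 < eps -> Rabs (a - b) < eps) -> a = b.
Proof.
  intros h. destruct (Req_dec a b) as [e|ne]; [exact e|].
  assert (hpos : 0 < Rabs (a - b)) by (apply Rabs_pos_lt; lra).
  specialize (h _ hpos). lra.
Qed.

Lemma mvt_line (f : R3 -> R) k y h : 0 < h ->
  (forall z, has_partial f k z (pd k f z)) ->
  exists c, 0 < c < h /\ f (shift y k h) - f y = pd k f (shift y k c) * h.
Proof.
  intros hh hd.
  destruct (MVT_cor2 (fun s => f (shift y k s)) (fun s => pd k f (shift y k s)) 0 h hh)
    as [c [e hc]].
  - intros c _. apply has_partial_line. apply hd.
  - exists c. split; [exact hc|]. rewrite !shift_0 in e. rewrite e. ring.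
Qed.

Lemma mvt_line_diff (f : R3 -> R) k y1 y2 h : 0 < h ->
  (forall z, has_partial f k z (pd k f z)) ->
  exists c, 0 < c < h /\
   (f (shift y1 k h) - f (shift y2 k h)) - (f y1 - f y2)
   = (pd k f (shift y1 k c) - pd k f (shift y2 k c)) * h.
Proof.
  intros hh hd.
  destruct (MVT_cor2 (fun s => f (shift y1 k s) - f (shift y2 k s))
     (fun s => pd k f (shift y1 k s) - pd k f (shift y2 k s)) 0 h hh) as [c [e hc]].
  - intros c _. apply (derivable_pt_lim_minus (fun s => f (shift y1 k s)) (fun s => f (shift y2 k s)));
      apply has_partial_line; apply hd.
  - exists c. split; [exact hc|]. rewrite !shift_0 in e. rewrite e. ring.
Qed.

Lemma second_difference (f : R3 -> R) i j x h : (i<3)%nat -> (j<3)%nat -> i <> j -> 0 < h ->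
  (forall z, has_partial f i z (pd i f z)) ->
  (forall z, has_partial (pd i f) j z (pd j (pd i f) z)) ->
  exists p, dist3 p x < h /\
    f (shift (shift x i h) j h) - f (shift x i h) - f (shift x j h) + f x = pd j (pd i f) p * (h * h).
Proof.
  intros hi hj hij hh d1 d2.
  destruct (mvt_line_diff f i (shift x j h) x h hh d1) as [c1 [hc1 e1]].
  destruct (mvt_line (pd i f) j (shift x i c1) h hh d2) as [c2 [hc2 e2]].
  exists (shift (shift x i c1) j c2). split.
  - apply dist_shift2; auto; rewrite Rabs_pos_eq; lra.
  - rewrite (shift_comm x i j h h).
    replace (f (shift (shift x j h) i h) - f (shift x i h) - f (shift x j h) + f x)
      with ((f (shift (shift x j h) i h) - f (shift x i h)) - (f (shift x j h) - f x)) by ring.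
    rewrite e1, (shift_comm x j i h c1), e2. ring.
Qed.

(** Schwarz: mixed partials of a C² function commute.  The second difference
    is symmetric in (i, j) and approximates both mixed partials. *)
Theorem schwarz (f : R3 -> R) : Ck 2 f ->
  forall i j, (i<3)%nat -> (j<3)%nat -> forall x, pd j (pd i f) x = pd i (pd j f) x.
Proof.
  intros hf i j hi hj x.
  destruct (Nat.eq_dec i j) as [e|ne]; [subst; reflexivity|].
  assert (d1 : forall z, has_partial f i z (pd i f z)) by (intro z; apply (Ck_has_partial 1); auto).
  assert (d2 : forall z, has_partial f j z (pd j f z)) by (intro z; apply (Ck_has_partial 1); auto).
  assert (d12 : forall z, has_partial (pd i f) j z (pd j (pd i f) z))
    by (intro z; apply (Ck_has_partial 0); auto; apply Ck_pd; auto).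
  assert (d21 : forall z, has_partial (pd j f) i z (pd i (pd j f) z))
    by (intro z; apply (Ck_has_partial 0); auto; apply Ck_pd; auto).
  assert (c12 : cont3 (pd j (pd i f))) by (apply (Ck_cont 0); apply Ck_pd; auto; apply Ck_pd; auto).
  assert (c21 : cont3 (pd i (pd j f))) by (apply (Ck_cont 0); apply Ck_pd; auto; apply Ck_pd; auto).
  apply eq_of_close. intros eps he.
  destruct (c12 x (eps/2) ltac:(lra)) as [del1 [hd1 k1]].
  destruct (c21 x (eps/2) ltac:(lra)) as [del2 [hd2 k2]].
  set (h := Rmin del1 del2 / 2).
  pose proof (Rmin_l del1 del2). pose proof (Rmin_r del1 del2).
  pose proof (Rmin_glb_lt _ _ _ hd1 hd2).
  assert (hh : 0 < h) by (unfold h; lra).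
  destruct (second_difference f i j x h hi hj ne hh d1 d12) as [p1 [dp1 e1]].
  destruct (second_difference f j i x h hj hi (not_eq_sym ne) hh d2 d21) as [p2 [dp2 e2]].
  rewrite (shift_comm x j i h h) in e2.
  assert (e : pd j (pd i f) p1 = pd i (pd j f) p2).
  { apply (Rmult_eq_reg_r (h*h)); [|nra]. rewrite <- e1, <- e2. ring. }
  specialize (k1 p1 ltac:(unfold h in *; lra)). specialize (k2 p2 ltac:(unfold h in *; lra)).
  rewrite e in k1.
  replace (pd j (pd i f) x - pd i (pd j f) x)
    with (- (pd i (pd j f) p2 - pd j (pd i f) x) + (pd i (pd j f) p2 - pd i (pd j f) x)) by ring.
  eapply Rle_lt_trans; [apply Rabs_triang|]. rewrite Rabs_Ropp. lra.
Qed.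

(** ** Differentiating the equation *)

(** The polarisation of σ₂: σ₂(M + εN) = σ₂(M) + ε·polar M N + O(ε²). *)
Definition sigma2_polar (M N : nat -> nat -> R) : R :=
  (M 0%nat 0%nat * N 1%nat 1%nat + N 0%nat 0%nat * M 1%nat 1%nat
     - M 0%nat 1%nat * N 1%nat 0%nat - N 0%nat 1%nat * M 1%nat 0%nat) +
  (M 0%nat 0%nat * N 2%nat 2%nat + N 0%nat 0%nat * M 2%nat 2%nat
     - M 0%nat 2%nat * N 2%nat 0%nat - N 0%nat 2%nat * M 2%nat 0%nat) +
  (M 1%nat 1%nat * N 2%nat 2%nat + N 1%nat 1%nat * M 2%nat 2%nat
     - M 1%nat 2%nat * N 2%nat 1%nat - N 1%nat 2%nat * M 2%nat 1%nat).

Lemma sigma2_polar_cof (M N : nat -> nat -> R) :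
  sigma2_polar M N = sum3 (fun i => sum3 (fun j => sigma2_cof M i j * N j i)).
Proof. unfold sigma2_polar, sigma2_cof, sum3, kron. simpl. ring. Qed.

Ltac hp_expand hM hN :=
  repeat first [ apply hp_minus | apply hp_plus | apply hp_mult | (apply hM; lia) | (apply hN; lia) ].

Lemma hp_sigma2 (M : nat -> nat -> R3 -> R) l y (A : nat -> nat -> R) :
  (forall i j, (i<3)%nat -> (j<3)%nat -> has_partial (M i j) l y (A i j)) ->
  has_partial (fun z => sigma2_mat (fun i j => M i j z)) l y (sigma2_polar (fun i j => M i j y) A).
Proof.
  intros hM. unfold sigma2_mat; cbv beta.
  eapply has_partial_eq; [hp_expand hM hM|]. unfold sigma2_polar. ring.
Qed.

Lemma hp_sigma2_polar (M N : nat -> nat -> R3 -> R) l y (A B : nat -> nat -> R) :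
  (forall i j, (i<3)%nat -> (j<3)%nat -> has_partial (M i j) l y (A i j)) ->
  (forall i j, (i<3)%nat -> (j<3)%nat -> has_partial (N i j) l y (B i j)) ->
  has_partial (fun z => sigma2_polar (fun i j => M i j z) (fun i j => N i j z)) l y
     (sigma2_polar A (fun i j => N i j y) + sigma2_polar (fun i j => M i j y) B).
Proof.
  intros hM hN. unfold sigma2_polar; cbv beta.
  eapply has_partial_eq; [hp_expand hM hN|]. ring.
Qed.

Lemma has_partial_of_const (f : R3 -> R) (c : R) l y a :
  (forall z, f z = c) -> has_partial f l y a -> a = 0.
Proof.
  intros hc h. replace f with (fun _ : R3 => c) in h by (apply functional_extensionality; auto).
  rewrite <- (pd_unique _ _ _ _ h). apply pd_unique. apply hp_const.
Qed.

Section Solution.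

Variable u : R3 -> R.
Hypothesis Hreg : Ck 4 u.
Hypothesis Heq : forall x, sigma2 u x = 1.

Lemma hess_sym i j : (i<3)%nat -> (j<3)%nat -> pd i (pd j u) = pd j (pd i u).
Proof.
  intros hi hj. apply functional_extensionality. intro y.
  apply (schwarz u); auto. apply Ck_mono, Ck_mono. exact Hreg.
Qed.

Lemma third_sym i j k : (i<3)%nat -> (j<3)%nat -> (k<3)%nat ->
  pd i (pd j (pd k u)) = pd j (pd i (pd k u)).
Proof.
  intros hi hj hk. apply functional_extensionality. intro y.
  apply (schwarz (pd k u)); auto. apply Ck_mono. apply Ck_pd; auto.
Qed.

Lemma fourth_sym i j l : (i<3)%nat -> (j<3)%nat -> (l<3)%nat ->
  pd l (pd l (pd i (pd j u))) = pd i (pd j (pd l (pd l u))).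
Proof.
  intros hi hj hl.
  assert (e : pd l (pd i (pd l (pd j u))) = pd i (pd l (pd l (pd j u)))).
  { apply functional_extensionality. intro y. apply (schwarz (pd l (pd j u))); auto.
    apply Ck_pd; auto. apply Ck_pd; auto. }
  rewrite (third_sym l i j), e, (hess_sym l j), (third_sym l j l) by auto. reflexivity.
Qed.

Lemma sigma2_first_variation l y : (l < 3)%nat ->
  sigma2_polar (fun i j => pd i (pd j u) y) (fun i j => pd l (pd i (pd j u)) y) = 0.
Proof.
  intros hl. apply (has_partial_of_const (fun z => sigma2_mat (fun i j => pd i (pd j u) z)) 1 l y).
  - intro z. apply Heq.
  - apply hp_sigma2. intros i j hi hj. apply (Ck_has_partial 1); auto.
    apply Ck_pd; auto. apply Ck_pd; auto.
Qed.

Lemma sigma2_second_variation l x : (l < 3)%nat ->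
  sigma2_polar (fun i j => pd l (pd i (pd j u)) x) (fun i j => pd l (pd i (pd j u)) x)
  + sigma2_polar (fun i j => pd i (pd j u) x) (fun i j => pd l (pd l (pd i (pd j u))) x) = 0.
Proof.
  intros hl.
  apply (has_partial_of_const
    (fun z => sigma2_polar (fun i j => pd i (pd j u) z) (fun i j => pd l (pd i (pd j u)) z)) 0 l x).
  - intro z. apply sigma2_first_variation. exact hl.
  - apply (hp_sigma2_polar (fun i j => pd i (pd j u)) (fun i j => pd l (pd i (pd j u)))).
    + intros i j hi hj. apply (Ck_has_partial 1); auto. apply Ck_pd; auto. apply Ck_pd; auto.
    + intros i j hi hj. apply (Ck_has_partial 0); auto.
      apply Ck_pd; auto. apply Ck_pd; auto. apply Ck_pd; auto.
Qed.

Lemma lap_has_partial i y : (i<3)%nat ->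
  has_partial (lap u) i y (sum3 (fun k => pd i (pd k (pd k u)) y)).
Proof.
  intros hi. unfold lap, sum3, hess.
  apply hp_plus; [apply hp_plus|];
  (apply (Ck_has_partial 1); [auto | apply Ck_pd; [lia | apply Ck_pd; [lia | exact Hreg]]]).
Qed.

Lemma lap_partial i : (i<3)%nat ->
  pd i (lap u) = fun y => sum3 (fun k => pd i (pd k (pd k u)) y).
Proof.
  intros hi. apply functional_extensionality. intro y. apply pd_unique. apply lap_has_partial; auto.
Qed.

Lemma lap_has_second_partial i j x : (i<3)%nat -> (j<3)%nat ->
  has_partial (pd j (lap u)) i x (sum3 (fun k => pd i (pd j (pd k (pd k u))) x)).
Proof.
  intros hi hj. rewrite (lap_partial j hj). unfold sum3.
  apply hp_plus; [apply hp_plus|];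
  (apply (Ck_has_partial 0); [auto |
     apply Ck_pd; [lia | apply Ck_pd; [lia | apply Ck_pd; [lia | exact Hreg]]]]).
Qed.

End Solution.

Section PointwiseIdentities.

Variable u : R3 -> R.
Hypothesis Hreg : Ck 4 u.
Hypothesis Heq : forall x, sigma2 u x = 1.
Variable x : R3.

Let T (i j k : nat) : R := pd i (pd j (pd k u)) x.

Lemma third_tensor_sym12 i j k : (i<3)%nat -> (j<3)%nat -> (k<3)%nat -> T i j k = T j i k.
Proof. intros hi hj hk. unfold T. rewrite (third_sym u Hreg i j k) by auto. reflexivity. Qed.

Lemma third_tensor_sym23 i j k : (i<3)%nat -> (j<3)%nat -> (k<3)%nat -> T i j k = T i k j.
Proof. intros hi hj hk. unfold T. rewrite (hess_sym u Hreg j k) by auto. reflexivity. Qed.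

Lemma lap_gradient k : (k<3)%nat -> pd k (lap u) x = trace_vec T k.
Proof.
  intros hk. rewrite (lap_partial u Hreg k hk). unfold trace_vec.
  apply sum3_ext_lt. intros i hi. unfold T.
  rewrite (third_sym u Hreg k i i), (hess_sym u Hreg k i) by auto. reflexivity.
Qed.

Lemma third_tensor_cof_kernel k : (k<3)%nat ->
  sum3 (fun i => sum3 (fun j => sigma2_cof (hess u x) i j * T i j k)) = 0.
Proof.
  intros hk. rewrite <- (sigma2_first_variation u Hreg Heq k x hk), sigma2_polar_cof.
  apply sum3_ext_lt; intros i hi; apply sum3_ext_lt; intros j hj. unfold T.
  rewrite (third_sym u Hreg k j i), (hess_sym u Hreg k i), (third_sym u Hreg j i k) by auto.
  reflexivity.
Qed.

Lemma lap_hessian_contraction :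
  sum3 (fun i => sum3 (fun j => sigma2_ij u x i j * pd i (pd j (lap u)) x))
  = tnorm2 T - sum3 (fun k => (trace_vec T k)^2).
Proof.
  set (H := hess u x).
  set (B := fun l i j => pd l (pd l (pd i (pd j u))) x).
  assert (Bsym : forall l i j, (l<3)%nat -> (i<3)%nat -> (j<3)%nat -> B l i j = B l j i)
    by (intros l i j hl hi hj; unfold B; rewrite (hess_sym u Hreg i j) by auto; reflexivity).
  assert (Hsym : forall i j, (i<3)%nat -> (j<3)%nat -> H i j = H j i)
    by (intros i j hi hj; unfold H, hess; rewrite (hess_sym u Hreg i j) by auto; reflexivity).
  assert (fourth : forall i j, (i<3)%nat -> (j<3)%nat -> pd i (pd j (lap u)) x = sum3 (fun l => B l i j)).
  { intros i j hi hj. rewrite (pd_unique _ _ _ _ (lap_has_second_partial u Hreg i j x hi hj)).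
    apply sum3_ext_lt. intros l hl. unfold B. rewrite (fourth_sym u Hreg i j l) by auto. reflexivity. }
  assert (second_var : forall l, (l<3)%nat ->
            sigma2_polar H (B l) = - sigma2_polar (T l) (T l)).
  { intros l hl. pose proof (sigma2_second_variation u Hreg Heq l x hl). unfold H, hess, B, T. cbv beta. lra. }
  transitivity (sum3 (fun l => sigma2_polar H (B l))).
  { rewrite (sum3_ext_lt _ (fun i => sum3 (fun j => sigma2_cof H i j * sum3 (fun l => B l i j)))).
    - unfold sigma2_polar, sigma2_cof, sum3, kron. simpl.
      rewrite (Hsym 1%nat 0%nat), (Hsym 2%nat 0%nat), (Hsym 2%nat 1%nat) by lia.
      sym3_normalize B (fun l i j (_ : (l<3)%nat) => B l i j) Bsym. ring.
    - intros i hi. apply sum3_ext_lt. intros j hj. rewrite fourth by auto. reflexivity. }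
  rewrite (sum3_ext_lt _ (fun l => - sigma2_polar (T l) (T l))) by exact second_var.
  unfold sigma2_polar, tnorm2, trace_vec, sum3.
  sym3_normalize T third_tensor_sym12 third_tensor_sym23. ring.
Qed.

End PointwiseIdentities.

Section LogLaplacian.

Variable u : R3 -> R.
Hypothesis Hreg : Ck 4 u.
Hypothesis lap_pos : forall y, 0 < lap u y.

Lemma log_lap_partial i : (i<3)%nat ->
  pd i (fun y => ln (lap u y)) = fun y => pd i (lap u) y / lap u y.
Proof.
  intros hi. apply functional_extensionality. intro y. apply pd_unique.
  apply hp_ln; [apply lap_pos|]. apply pd_spec. eexists. apply lap_has_partial; auto.
Qed.

Lemma log_lap_second_partial i j x : (i<3)%nat -> (j<3)%nat ->
  pd i (pd j (fun y => ln (lap u y))) x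
  = (pd i (pd j (lap u)) x * lap u x - pd i (lap u) x * pd j (lap u) x) / (lap u x)^2.
Proof.
  intros hi hj. rewrite (log_lap_partial j hj). apply pd_unique.
  apply hp_div.
  - pose proof (lap_pos x). lra.
  - apply pd_spec. eexists. apply lap_has_second_partial; auto.
  - apply pd_spec. eexists. apply lap_has_partial; auto.
Qed.

End LogLaplacian.

(** With L > 0, the inequality L·C(V) ≥ (26/25) C(t, t) for a quadratic form C
    is the claimed one after dividing by L²:
    C((V L - t tᵀ)/L²) ≥ (1/25) C(t/L, t/L). *)
Lemma log_rearrangement (C V : nat -> nat -> R) (t : nat -> R) (L : R) : 0 < L ->
  L * sum3 (fun i => sum3 (fun j => C i j * V i j))
    >= 26/25 * sum3 (fun i => sum3 (fun j => C i j * t i * t j)) ->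
  sum3 (fun i => sum3 (fun j => C i j * ((V i j * L - t i * t j) / L^2)))
    >= 1/25 * sum3 (fun i => sum3 (fun j => C i j * (t i / L) * (t j / L))).
Proof.
  intros hL h.
  set (SV := sum3 (fun i => sum3 (fun j => C i j * V i j))) in *.
  set (Y := sum3 (fun i => sum3 (fun j => C i j * t i * t j))) in *.
  assert (lhs : sum3 (fun i => sum3 (fun j => C i j * ((V i j * L - t i * t j) / L^2)))
                = (L * SV - Y) / L^2) by (unfold SV, Y, sum3; field; lra).
  assert (rhs : sum3 (fun i => sum3 (fun j => C i j * (t i / L) * (t j / L))) = Y / L^2)
    by (unfold Y, sum3; field; lra).
  rewrite lhs, rhs.
  assert (0 <= (L * SV - 26/25 * Y) * / L^2)
    by (apply Rmult_le_pos; [lra | apply Rlt_le, Rinv_0_lt_compat, pow_lt; lra]).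
  unfold Rdiv. lra.
Qed.

Theorem lemma3p1 (u : R3 -> R)
  (Hreg : Ck 4 u)
  (Hconv : two_convex u)
  (Heq : forall x, sigma2 u x = 1) :
  forall x : R3,
    let w := fun y => ln (lap u y) in
    sum3 (fun i => sum3 (fun j => sigma2_ij u x i j * pd i (pd j w) x))
    >= 1 / 25 *
       sum3 (fun i => sum3 (fun j => sigma2_ij u x i j * pd i w x * pd j w x)).
Proof.
  intros x w.
  assert (lap_pos : forall y, 0 < lap u y) by (intro y; exact (proj1 (Hconv y))).
  set (T := fun i j k => pd i (pd j (pd k u)) x).
  set (L := lap u x).
  assert (hess_w : sum3 (fun i => sum3 (fun j => sigma2_ij u x i j * pd i (pd j w) x))
    = sum3 (fun i => sum3 (fun j => sigma2_ij u x i j *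
        ((pd i (pd j (lap u)) x * L - trace_vec T i * trace_vec T j) / L^2)))).
  { apply sum3_ext_lt; intros i hi; apply sum3_ext_lt; intros j hj. unfold w.
    rewrite (log_lap_second_partial u Hreg lap_pos i j x hi hj),
            (lap_gradient u Hreg x i hi), (lap_gradient u Hreg x j hj). reflexivity. }
  assert (grad_w : sum3 (fun i => sum3 (fun j => sigma2_ij u x i j * pd i w x * pd j w x))
    = sum3 (fun i => sum3 (fun j => sigma2_ij u x i j * (trace_vec T i / L) * (trace_vec T j / L)))).
  { apply sum3_ext_lt; intros i hi; apply sum3_ext_lt; intros j hj. unfold w.
    rewrite (log_lap_partial u Hreg lap_pos i hi), (log_lap_partial u Hreg lap_pos j hj),
            (lap_gradient u Hreg x i hi), (lap_gradient u Hreg x j hj). reflexivity. }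
  rewrite hess_w, grad_w.
  apply log_rearrangement; [apply lap_pos |].
  rewrite (lap_hessian_contraction u Hreg Heq x).
  apply (key_inequality (hess u x) T).
  - intros i j hi hj. unfold hess. rewrite (hess_sym u Hreg i j) by auto. reflexivity.
  - exact (third_tensor_sym12 u Hreg x).
  - exact (third_tensor_sym23 u Hreg x).
  - exact (lap_pos x).
  - exact (proj2 (Hconv x)).
  - exact (third_tensor_cof_kernel u Hreg Heq x).
Qed.
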